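(* Let $(V,\|\cdot\|)$ be a normed plane and let $x,y\in V$ be distinct points such that $[xy]$ is parallel to a nondegenerate segment contained in the unit circle $S$. Let $p\in V$ be the center of one of the two circles which contain $[xy]$ as a maximal segment. Let $l$ be any line parallel to $\langle xy\rangle$ such that $p$ lies in the interior of the strip bounded by $\langle xy\rangle$ and $l$. Then $l\cap\mathrm{bis}(x,y)=[x_1y_1]$, where $x_1$ and $y_1$ are the intersection points of the half-lines $[xp\rangle$ and $[yp\rangle$ with $l$, respectively. In particular, $\mathrm{bis}(x,y)$ contains the cone $\mathrm{conv}\big([p(2p-x)\rangle\cup[p(2p-y)\rangle\big)$, and consequently $\mathrm{bis}(x,y)$ has nonempty interior.
   Context: A normed (Minkowski) plane $(V,\|\cdot\|)$ is a two-dimensional real vector space with a norm; $S=\{v:\|v\|=1\}$ is its unit circle. For $x,y\in V$, $[xy]$ denotes the closed segment, $\langle xy\rangle$ the line through $x,y$, and $[xy\rangle$ the closed half-line starting at $x$ through $y$. For distinct $x,y$, $\mathrm{bis}(x,y)=\{z\in V:\|z-x\|=\|z-y\|\}$. A circle with center $c$ and radius $\lambda>0$ is $c+\lambda S$. A maximal segment of a circle is a nondegenerate segment contained in the circle that is not properly contained in any other segment contained in that circle. Fact used in the statement: if $[xy]$ is parallel to a nondegenerate segment of $S$, then there are exactly two circles containing $[xy]$ as a maximal segment, and their centers lie in the two different open half-planes determined by $\langle xy\rangle$. *)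

(* the normed plane is R^2 = R*R with an arbitrary norm N.
   (Every 2-dimensional real normed space is linearly isometric to such.) *)
From Stdlib Require Import Reals.
Open Scope R_scope.

Definition pt := (R * R)%type.
Definition vadd (u v : pt) : pt := (fst u + fst v, snd u + snd v).
Definition vsub (u v : pt) : pt := (fst u - fst v, snd u - snd v).
Definition vscal (a : R) (u : pt) : pt := (a * fst u, a * snd u).
Definition vzero : pt := (0, 0).
Definition cross (u v : pt) : R := fst u * snd v - snd u * fst v.

Definition is_norm (N : pt -> R) : Prop :=
  (forall v, N v = 0 -> v = vzero) /\
  (forall a v, N (vscal a v) = Rabs a * N v) /\
  (forall u v, N (vadd u v) <= N u + N v).

Definition unit_circle (N : pt -> R) (z : pt) : Prop := N z = 1.
Definition circle (N : pt -> R) (c : pt) (lam : R) (z : pt) : Prop :=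
  N (vsub z c) = lam.

Definition seg (x y z : pt) : Prop :=
  exists t, 0 <= t <= 1 /\ z = vadd (vscal (1 - t) x) (vscal t y).
Definition halfline (x y z : pt) : Prop :=
  exists t, 0 <= t /\ z = vadd x (vscal t (vsub y x)).
Definition line_dir (q d z : pt) : Prop :=
  exists t, z = vadd q (vscal t d).

Definition subset (A B : pt -> Prop) : Prop := forall z, A z -> B z.
Definition set_eq (A B : pt -> Prop) : Prop := forall z, A z <-> B z.

Definition max_seg (C : pt -> Prop) (u v : pt) : Prop :=
  u <> v /\ subset (seg u v) C /\
  forall a b, a <> b -> subset (seg a b) C -> subset (seg u v) (seg a b) ->
    subset (seg a b) (seg u v).

Definition parallel_to_seg_of_S (N : pt -> R) (x y : pt) : Prop :=
  exists a b, a <> b /\ subset (seg a b) (unit_circle N) /\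
    cross (vsub y x) (vsub b a) = 0.

Definition bis (N : pt -> R) (x y z : pt) : Prop :=
  N (vsub z x) = N (vsub z y).

(* p lies in the interior of the strip bounded by <xy> and the line through q
   parallel to <xy>: its signed position relative to <xy> lies strictly between
   that of <xy> (= 0) and that of the line through q. *)
Definition in_open_strip (x y q p : pt) : Prop :=
  let s := fun z => cross (vsub y x) (vsub z x) in
  (0 < s p /\ s p < s q) \/ (s q < s p /\ s p < 0).

Definition convex (C : pt -> Prop) : Prop :=
  forall u v t, C u -> C v -> 0 <= t <= 1 ->
    C (vadd (vscal (1 - t) u) (vscal t v)).
Definition conv (A : pt -> Prop) (z : pt) : Prop :=
  forall C, convex C -> subset A C -> C z.

Definition has_nonempty_interior (N : pt -> R) (A : pt -> Prop) : Prop :=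
  exists z eps, 0 < eps /\ forall w, N (vsub w z) < eps -> A w.

From Stdlib Require Import Reals Lra Psatz.
Open Scope R_scope.

(* Put u = p - x, v = p - y and write points as p + a u + b v.  The function
   s |-> N ((1 - s) u + s v) is convex, equals lam on [0, 1] and, by maximality
   of [xy], exceeds lam outside [0, 1].  Since z - x = (a + 1) u + b v and
   z - y = a u + (b + 1) v, on a line a + b = const >= 0 the bisector condition
   compares this function at two parameters at most 1 apart, which forces
   a, b >= 0.  So the bisector contains the cone {a, b >= 0}, spanned by the two
   reflected half-lines, and meets a parallel line in the strip exactly in the
   segment cut out by this cone.  The cone contains a ball around p + 2 u + 2 v
   because 2 N (a u + b v) >= N (u - v) max (|a|, |b|). *)

Definition vcomb (a : R) (u : pt) (b : R) (v : pt) : pt := vadd (vscal a u) (vscal b v).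

Ltac pt_unfold :=
  repeat match goal with
         | |- context [?w] => is_var w; match type of w with pt => destruct w end
         end;
  unfold vcomb, vadd, vsub, vscal, vzero, cross in *; simpl in *.

Ltac pt_eq := pt_unfold; f_equal.

Lemma vcomb_sym a u b v : vcomb a u b v = vcomb b v a u.
Proof. pt_eq; ring. Qed.

Lemma div_in_unit_interval a b : 0 <= a <= b -> 0 < b -> 0 <= a / b <= 1.
Proof.
  intros Hab Hb.
  assert (H : a / b * b = a) by (field; lra).
  split; nra.
Qed.

Lemma vcomb_affine_inj x y s t :
  x <> y -> vcomb (1 - s) x s y = vcomb (1 - t) x t y -> s = t.
Proof.
  intros Hxy E; destruct (Req_dec s t) as [|Hst]; [assumption|exfalso].
  destruct x as [x1 x2], y as [y1 y2]; unfold vcomb, vadd, vscal in E; simpl in E.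
  injection E as E1 E2; apply Hxy.
  assert (y1 = x1) by (apply (Rmult_eq_reg_l (s - t)); lra).
  assert (y2 = x2) by (apply (Rmult_eq_reg_l (s - t)); lra).
  subst; reflexivity.
Qed.

Lemma vcomb_affine_comp x y s t r :
  vcomb (1 - r) (vcomb (1 - s) x s y) r (vcomb (1 - t) x t y)
  = vcomb (1 - ((1 - r) * s + r * t)) x ((1 - r) * s + r * t) y.
Proof. pt_eq; ring. Qed.

Lemma vcomb_decomp u v w : cross u v <> 0 -> exists a b, w = vcomb a u b v.
Proof.
  intros H; exists (cross w v / cross u v), (cross u w / cross u v).
  pt_eq; field; exact H.
Qed.

Section Norm.

Variable N : pt -> R.
Hypothesis HN : is_norm N.

Lemma norm_scal a w : N (vscal a w) = Rabs a * N w.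
Proof. destruct HN as (_ & H & _); apply H. Qed.

Lemma norm_triangle u v : N (vadd u v) <= N u + N v.
Proof. destruct HN as (_ & _ & H); apply H. Qed.

Lemma norm_zero : N vzero = 0.
Proof.
  replace vzero with (vscal 0 vzero) by (pt_eq; ring).
  rewrite norm_scal, Rabs_R0; ring.
Qed.

Lemma norm_opp w : N (vscal (-1) w) = N w.
Proof. rewrite norm_scal, Rabs_left by lra; ring. Qed.

Lemma norm_nonneg w : 0 <= N w.
Proof.
  assert (H := norm_triangle w (vscal (-1) w)).
  replace (vadd w (vscal (-1) w)) with vzero in H by (pt_eq; ring).
  rewrite norm_zero, norm_opp in H; lra.
Qed.

Lemma norm_pos w : w <> vzero -> 0 < N w.
Proof.
  intros Hw; destruct (norm_nonneg w) as [|H]; [assumption|].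
  destruct HN as [Hdef _]; contradiction (Hw (Hdef w (eq_sym H))).
Qed.

Lemma norm_vcomb_le a u b v :
  0 <= a -> 0 <= b -> N (vcomb a u b v) <= a * N u + b * N v.
Proof.
  intros Ha Hb; eapply Rle_trans; [apply norm_triangle|].
  rewrite !norm_scal, !Rabs_pos_eq by assumption; lra.
Qed.

End Norm.

Definition convex_fun (f : R -> R) : Prop :=
  forall s t r, 0 <= r <= 1 -> f ((1 - r) * s + r * t) <= (1 - r) * f s + r * f t.

Lemma convex_fun_chord f a s b : convex_fun f -> a <= s <= b -> a < b ->
  (b - a) * f s <= (b - s) * f a + (s - a) * f b.
Proof.
  intros Hf Hs Hab.
  pose (r := (s - a) / (b - a)).
  assert (Hr : r * (b - a) = s - a) by (unfold r; field; lra).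
  assert (H := Hf a b r (div_in_unit_interval (s - a) (b - a) ltac:(lra) ltac:(lra))).
  fold r in H; replace ((1 - r) * a + r * b) with s in H by nra.
  nra.
Qed.

Lemma convex_fun_eq_step f L s t : convex_fun f ->
  (forall w, 0 <= w <= 1 -> f w = L) -> (forall w, w < 0 \/ 1 < w -> L < f w) ->
  s < t <= s + 1 -> f s = f t -> 0 <= s /\ t <= 1.
Proof.
  intros Hf Hin Hout Hst E; split.
  - destruct (Rle_lt_dec 0 s) as [|Hs]; [assumption|exfalso].
    assert (H := convex_fun_chord f s t 1 Hf ltac:(lra) ltac:(lra)).
    assert (Hs' := Hout s (or_introl Hs)); rewrite (Hin 1) in H by lra; nra.
  - destruct (Rle_lt_dec t 1) as [|Ht]; [assumption|exfalso].
    assert (H := convex_fun_chord f 0 s t Hf ltac:(lra) ltac:(lra)).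
    assert (Ht' := Hout t (or_intror Ht)); rewrite (Hin 0) in H by lra; nra.
Qed.

Definition radial (N : pt -> R) (u v : pt) (s : R) : R := N (vcomb (1 - s) u s v).

Lemma radial_convex N u v : is_norm N -> convex_fun (radial N u v).
Proof.
  intros HN s t r Hr; unfold radial.
  replace (vcomb _ u _ v) with
    (vcomb (1 - r) (vcomb (1 - s) u s v) r (vcomb (1 - t) u t v))
    by (pt_eq; ring).
  apply norm_vcomb_le; [exact HN | lra | lra].
Qed.

Lemma radial_swap N u v s : radial N v u (1 - s) = radial N u v s.
Proof. unfold radial; f_equal; pt_eq; ring. Qed.

Lemma norm_vcomb_radial N u v a b : is_norm N -> a + b <> 0 ->
  N (vcomb a u b v) = Rabs (a + b) * radial N u v (b / (a + b)).
Proof.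
  intros HN Hab; unfold radial; rewrite <- norm_scal by assumption.
  f_equal; pt_eq; field; assumption.
Qed.

Lemma seg_sym x y : subset (seg x y) (seg y x).
Proof.
  intros z [t [Ht ->]]; exists (1 - t); split; [lra|]; pt_eq; ring.
Qed.

Lemma max_seg_sym C x y : max_seg C x y -> max_seg C y x.
Proof.
  intros [Hxy [Hon Hmax]]; split; [|split].
  - intros E; apply Hxy; symmetry; exact E.
  - intros z Hz; apply Hon, seg_sym, Hz.
  - intros a b Hab HC Hsub z Hz.
    apply seg_sym, (Hmax a b Hab HC); [intros w Hw; apply Hsub, seg_sym, Hw | exact Hz].
Qed.

Section MaximalSegment.

Variables (N : pt -> R) (p : pt) (lam : R).
Hypothesis HN : is_norm N.

Lemma circle_vcomb_radial x y s :
  circle N p lam (vcomb (1 - s) x s y) <-> radial N (vsub p x) (vsub p y) s = lam.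
Proof.
  unfold circle, radial; rewrite <- (norm_opp N HN (vsub _ p)).
  replace (vscal (-1) _) with (vcomb (1 - s) (vsub p x) s (vsub p y))
    by (pt_eq; ring).
  reflexivity.
Qed.

Lemma max_seg_radial_eq x y s : max_seg (circle N p lam) x y ->
  0 <= s <= 1 -> radial N (vsub p x) (vsub p y) s = lam.
Proof.
  intros [_ [Hon _]] Hs; apply circle_vcomb_radial, Hon; exists s; split; auto.
Qed.

(* If the radial function dropped to [lam] at [t < 0], convexity would put the
   longer segment from the point of parameter [t] to [y] on the circle. *)
Lemma max_seg_radial_gt_left x y t : max_seg (circle N p lam) x y ->
  t < 0 -> lam < radial N (vsub p x) (vsub p y) t.
Proof.
  intros Hm Ht.
  set (f := radial N (vsub p x) (vsub p y)).
  assert (Hon : forall s, 0 <= s <= 1 -> f s = lam) by (intros; apply max_seg_radial_eq; auto).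
  destruct (Rlt_le_dec lam (f t)) as [|Hle]; [assumption|exfalso].
  assert (Hflat : forall s, t <= s <= 1 -> f s = lam).
  { intros s Hs; destruct (Rle_lt_dec 0 s) as [|Hs0]; [apply Hon; lra|].
    assert (H1 := convex_fun_chord f t s 1 (radial_convex _ _ _ HN) ltac:(lra) ltac:(lra)).
    assert (H2 := convex_fun_chord f s 0 1 (radial_convex _ _ _ HN) ltac:(lra) ltac:(lra)).
    rewrite (Hon 1) in H1 by lra; rewrite (Hon 0), (Hon 1) in H2 by lra.
    assert (H3 : (1 - s) * f t <= (1 - s) * lam) by (apply Rmult_le_compat_l; lra).
    apply Rle_antisym; [|lra].
    apply Rmult_le_reg_l with (1 - t); lra. }
  destruct Hm as [Hxy [_ Hmax]].
  set (w := vcomb (1 - t) x t y).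
  assert (Hy : y = vcomb (1 - 1) x 1 y) by (pt_eq; ring).
  assert (Hwy : w <> y).
  { intros E; rewrite Hy in E; apply vcomb_affine_inj in E; [lra | exact Hxy]. }
  assert (Hsub : subset (seg w y) (seg x y)).
  { apply (Hmax w y Hwy).
    - intros z [r [Hr ->]]; unfold w.
      replace (vadd _ _) with (vcomb (1 - r) (vcomb (1 - t) x t y) r (vcomb (1 - 1) x 1 y))
        by (pt_eq; ring).
      rewrite vcomb_affine_comp.
      apply circle_vcomb_radial, Hflat; nra.
    - intros z [r [Hr ->]]; exists ((r - t) / (1 - t)); split.
      + apply div_in_unit_interval; lra.
      + unfold w; pt_eq; field; lra. }
  destruct (Hsub w) as [r [Hr E]].
  { exists 0; split; [lra|]; unfold w; pt_eq; ring. }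
  apply vcomb_affine_inj in E; [lra | exact Hxy].
Qed.

Lemma max_seg_radial_gt x y s : max_seg (circle N p lam) x y ->
  s < 0 \/ 1 < s -> lam < radial N (vsub p x) (vsub p y) s.
Proof.
  intros Hm [Hs|Hs]; [apply max_seg_radial_gt_left; assumption|].
  rewrite <- radial_swap; apply max_seg_radial_gt_left; [apply max_seg_sym, Hm | lra].
Qed.

End MaximalSegment.

Definition cone (p u v : pt) (z : pt) : Prop :=
  exists a b, 0 <= a /\ 0 <= b /\ z = vadd p (vcomb a u b v).

Lemma cone_convex p u v : convex (cone p u v).
Proof.
  intros z1 z2 t (a1 & b1 & Ha1 & Hb1 & ->) (a2 & b2 & Ha2 & Hb2 & ->) Ht.
  exists ((1 - t) * a1 + t * a2), ((1 - t) * b1 + t * b2).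
  split; [nra | split; [nra | pt_eq; ring]].
Qed.

Lemma conv_reflected_halflines_subset_cone x y p :
  subset (conv (fun z => halfline p (vsub (vscal 2 p) x) z \/
                         halfline p (vsub (vscal 2 p) y) z))
    (cone p (vsub p x) (vsub p y)).
Proof.
  intros z Hz; apply Hz; [apply cone_convex|].
  intros w [[t [Ht ->]] | [t [Ht ->]]]; [exists t, 0 | exists 0, t];
    (split; [lra | split; [lra | pt_eq; ring]]).
Qed.

Lemma seg_cone_iff p u v K z : 0 < K ->
  (seg (vadd p (vscal K u)) (vadd p (vscal K v)) z <->
   exists a b, 0 <= a /\ 0 <= b /\ a + b = K /\ z = vadd p (vcomb a u b v)).
Proof.
  intros HK; split.
  - intros [r [Hr ->]]; exists ((1 - r) * K), (r * K).
    split; [nra | split; [nra | split; [ring | pt_eq; ring]]].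
  - intros (a & b & Ha & Hb & Hab & ->); exists (b / K); split.
    + apply div_in_unit_interval; lra.
    + replace a with (K - b) by lra; pt_eq; field; lra.
Qed.

Definition height (x y z : pt) : R := cross (vsub y x) (vsub z x).

Lemma height_base x y : height x y x = 0 /\ height x y y = 0.
Proof. unfold height; split; pt_unfold; ring. Qed.

Lemma height_halfline x y o p t : height x y o = 0 ->
  height x y (vadd o (vscal t (vsub p o))) = t * height x y p.
Proof.
  intros Ho.
  replace (height x y _) with ((1 - t) * height x y o + t * height x y p)
    by (unfold height; pt_unfold; ring).
  rewrite Ho; ring.
Qed.

Lemma height_cone x y p a b :
  height x y (vadd p (vcomb a (vsub p x) b (vsub p y))) = (1 + a + b) * height x y p.
Proof. unfold height; pt_unfold; ring. Qed.

Lemma cross_apex x y p : cross (vsub p x) (vsub p y) = height x y p.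
Proof. unfold height; pt_unfold; ring. Qed.

Lemma line_dir_height_iff x y q z : x <> y ->
  (line_dir q (vsub y x) z <-> height x y z = height x y q).
Proof.
  intros Hxy; unfold height; split.
  - intros [t ->]; pt_unfold; ring.
  - destruct x as [x1 x2], y as [y1 y2], z as [z1 z2], q as [q1 q2].
    unfold cross, vsub, vadd, vscal; simpl; intros H.
    set (d1 := y1 - x1) in *; set (d2 := y2 - x2) in *.
    assert (Hd : 0 < d1 * d1 + d2 * d2).
    { destruct (Req_dec d1 0), (Req_dec d2 0); try nra.
      exfalso; apply Hxy; f_equal; unfold d1, d2 in *; lra. }
    (* [t] is the coordinate of [z - q] along the direction [d] *)
    assert (Hc : d1 * (z2 - q2) = d2 * (z1 - q1)) by lra.
    exists ((d1 * (z1 - q1) + d2 * (z2 - q2)) / (d1 * d1 + d2 * d2)).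
    unfold vadd, vscal; simpl; f_equal; field_simplify_eq; try lra.
    + assert (d2 * (d1 * (z2 - q2)) = d2 * (d2 * (z1 - q1))) by (rewrite Hc; ring); lra.
    + assert (d1 * (d1 * (z2 - q2)) = d1 * (d2 * (z1 - q1))) by (rewrite Hc; ring); lra.
Qed.

Lemma in_open_strip_ratio x y q p : in_open_strip x y q p ->
  height x y p <> 0 /\ 1 < height x y q / height x y p.
Proof.
  unfold in_open_strip, height; cbv zeta.
  set (hp := cross (vsub y x) (vsub p x)); set (hq := cross (vsub y x) (vsub q x)).
  intros H; assert (Hp : hp <> 0) by lra; split; [exact Hp|].
  assert (E : hq / hp * hp = hq) by (field; exact Hp).
  destruct H as [[H1 H2] | [H1 H2]]; nra.
Qed.

Lemma halfline_line_iff x y o p q z : x <> y -> height x y o = 0 ->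
  height x y p <> 0 -> 0 <= height x y q / height x y p ->
  (halfline o p z /\ line_dir q (vsub y x) z <->
   z = vadd o (vscal (height x y q / height x y p) (vsub p o))).
Proof.
  intros Hxy Ho Hp Hk; rewrite line_dir_height_iff by exact Hxy; split.
  - intros [[t [Ht ->]] Hl]; rewrite height_halfline in Hl by exact Ho.
    replace t with (height x y q / height x y p) by (rewrite <- Hl; field; exact Hp).
    reflexivity.
  - intros ->; split; [exists (height x y q / height x y p); split; auto|].
    rewrite height_halfline by exact Ho; field; exact Hp.
Qed.

Section CircleCone.

Variables (N : pt -> R) (x y p : pt) (lam : R).
Hypothesis HN : is_norm N.
Hypothesis Hmax : max_seg (circle N p lam) x y.

Local Notation u := (vsub p x).
Local Notation v := (vsub p y).

Lemma radial_ge s : lam <= radial N u v s.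
Proof.
  destruct (Rle_lt_dec 0 s); [destruct (Rle_lt_dec s 1)|].
  - rewrite (max_seg_radial_eq N p lam HN x y s Hmax); lra.
  - apply Rlt_le, (max_seg_radial_gt N p lam HN x y s Hmax); lra.
  - apply Rlt_le, (max_seg_radial_gt N p lam HN x y s Hmax); lra.
Qed.

Lemma norm_vcomb_cone a b : 0 <= a -> 0 <= b -> N (vcomb a u b v) = (a + b) * lam.
Proof.
  intros Ha Hb; destruct (Req_dec (a + b) 0) as [E|E].
  - replace a with 0 by lra; replace b with 0 by lra.
    replace (vcomb 0 u 0 v) with vzero by (pt_eq; ring).
    rewrite (norm_zero N HN); ring.
  - rewrite (norm_vcomb_radial N u v a b HN E), Rabs_pos_eq by lra.
    rewrite (max_seg_radial_eq N p lam HN x y _ Hmax); [ring|].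
    apply div_in_unit_interval; lra.
Qed.

Lemma norm_vcomb_ge a b : Rabs (a + b) * lam <= N (vcomb a u b v).
Proof.
  destruct (Req_dec (a + b) 0) as [E|E].
  - rewrite E, Rabs_R0, Rmult_0_l; apply (norm_nonneg N HN).
  - rewrite (norm_vcomb_radial N u v a b HN E).
    apply Rmult_le_compat_l; [apply Rabs_pos | apply radial_ge].
Qed.

(* Write [a u + b v] as [a (u - v) + (a + b) v], and symmetrically. *)
Lemma norm_vcomb_coef_le a b :
  Rabs a * N (vsub u v) <= 2 * N (vcomb a u b v) /\
  Rabs b * N (vsub u v) <= 2 * N (vcomb a u b v).
Proof.
  assert (Hu : N u = lam).
  { replace u with (vcomb 1 u 0 v) at 1 by (pt_eq; ring).
    rewrite norm_vcomb_cone; lra. }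
  assert (Hv : N v = lam).
  { replace v with (vcomb 0 u 1 v) at 1 by (pt_eq; ring).
    rewrite norm_vcomb_cone; lra. }
  assert (Hshift : forall c d w1 w2, N w2 = lam ->
    Rabs c * N (vsub w1 w2) <= N (vcomb c w1 d w2) + Rabs (c + d) * lam).
  { intros c d w1 w2 Hw2; rewrite <- (norm_scal N HN).
    replace (vscal c (vsub w1 w2)) with (vadd (vcomb c w1 d w2) (vscal (- (c + d)) w2))
      by (pt_eq; ring).
    eapply Rle_trans; [apply (norm_triangle N HN)|].
    rewrite (norm_scal N HN), Rabs_Ropp, Hw2; lra. }
  assert (Hvu : N (vsub v u) = N (vsub u v)).
  { rewrite <- (norm_opp N HN (vsub u v)); f_equal; pt_eq; ring. }
  assert (H1 := Hshift a b u v Hv).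
  assert (H2 := Hshift b a v u Hu).
  rewrite vcomb_sym, Hvu, (Rplus_comm b a) in H2.
  assert (H3 := norm_vcomb_ge a b).
  split; lra.
Qed.

Lemma bis_vcomb_iff a b : 0 <= a + b ->
  (bis N x y (vadd p (vcomb a u b v)) <-> 0 <= a /\ 0 <= b).
Proof.
  intros Hab; unfold bis.
  replace (vsub (vadd p (vcomb a u b v)) x) with (vcomb (a + 1) u b v) by (pt_eq; ring).
  replace (vsub (vadd p (vcomb a u b v)) y) with (vcomb a u (b + 1) v) by (pt_eq; ring).
  split.
  - rewrite (norm_vcomb_radial N u v (a + 1) b HN ltac:(lra)).
    rewrite (norm_vcomb_radial N u v a (b + 1) HN ltac:(lra)).
    replace (a + (b + 1)) with (a + 1 + b) by ring.
    set (K := a + 1 + b); assert (HK : 1 <= K) by (unfold K; lra).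
    rewrite Rabs_pos_eq by lra; intros E; apply Rmult_eq_reg_l in E; [|lra].
    (* The bisector condition compares the radial function at two parameters
       [1 / K <= 1] apart. *)
    assert (Hstep : (b + 1) / K = b / K + 1 / K) by (field; lra).
    assert (Hinv : 0 < 1 / K <= 1).
    { split; [apply Rdiv_lt_0_compat; lra|].
      apply div_in_unit_interval; lra. }
    destruct (convex_fun_eq_step _ lam (b / K) ((b + 1) / K) (radial_convex N u v HN)
                (fun w => max_seg_radial_eq N p lam HN x y w Hmax)
                (fun w => max_seg_radial_gt N p lam HN x y w Hmax)
                ltac:(lra) E) as [H1 H2].
    assert (Hs : b / K * K = b) by (field; lra).
    assert (Ht : (b + 1) / K * K = b + 1) by (field; lra).
    assert (HKdef : K = a + 1 + b) by reflexivity; clearbody K.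
    split; [|rewrite <- Hs; apply Rmult_le_pos; lra].
    assert (H3 : (b + 1) / K * K <= 1 * K) by (apply Rmult_le_compat_r; lra); lra.
  - intros [Ha Hb]; rewrite !norm_vcomb_cone by lra; ring.
Qed.

Lemma cone_subset_bis : subset (cone p u v) (bis N x y).
Proof. intros z (a & b & Ha & Hb & ->); apply bis_vcomb_iff; lra. Qed.

(* A ball around [p + 2 u + 2 v] stays inside the cone, since its points have
   coefficients in [(1, 3)]. *)
Lemma bis_nonempty_interior : cross u v <> 0 -> has_nonempty_interior N (bis N x y).
Proof.
  intros Huv.
  assert (Hm : 0 < N (vsub u v)).
  { apply (norm_pos N HN); intros E; apply (proj1 Hmax).
    destruct x, y, p; unfold vsub, vzero in E; simpl in E.
    injection E as E1 E2; f_equal; lra. }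
  exists (vadd p (vcomb 2 u 2 v)), (N (vsub u v) / 2); split; [lra|].
  intros w Hw.
  destruct (vcomb_decomp u v (vsub w (vadd p (vcomb 2 u 2 v))) Huv) as (a & b & E).
  rewrite E in Hw; destruct (norm_vcomb_coef_le a b) as [Ha Hb].
  assert (Ha1 : Rabs a < 1) by nra.
  assert (Hb1 : Rabs b < 1) by nra.
  apply Rabs_def2 in Ha1; apply Rabs_def2 in Hb1.
  apply cone_subset_bis; exists (2 + a), (2 + b).
  split; [lra | split; [lra|]].
  replace w with (vadd (vadd p (vcomb 2 u 2 v)) (vsub w (vadd p (vcomb 2 u 2 v))))
    by (pt_eq; ring).
  rewrite E; pt_eq; ring.
Qed.

Lemma line_bis_eq_seg q : height x y p <> 0 -> 1 < height x y q / height x y p ->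
  set_eq (fun z => line_dir q (vsub y x) z /\ bis N x y z)
    (seg (vadd x (vscal (height x y q / height x y p) (vsub p x)))
         (vadd y (vscal (height x y q / height x y p) (vsub p y)))).
Proof.
  intros Hh Hk; set (k := height x y q / height x y p) in *.
  pose proof (proj1 Hmax) as Hxy.
  assert (Hcone_line : forall a b,
    line_dir q (vsub y x) (vadd p (vcomb a u b v)) <-> a + b = k - 1).
  { intros a b; rewrite line_dir_height_iff, height_cone by exact Hxy; unfold k.
    split; intros E; [rewrite <- E; field; exact Hh|].
    replace (1 + a + b) with (height x y q / height x y p) by lra; field; exact Hh. }
  replace (vadd x (vscal k u)) with (vadd p (vscal (k - 1) u)) by (pt_eq; ring).
  replace (vadd y (vscal k v)) with (vadd p (vscal (k - 1) v)) by (pt_eq; ring).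
  intros z; rewrite seg_cone_iff by lra; split.
  - intros [Hl Hb].
    assert (Huv : cross u v <> 0) by (rewrite cross_apex; exact Hh).
    destruct (vcomb_decomp u v (vsub z p) Huv) as (a & b & E).
    replace z with (vadd p (vcomb a u b v)) in * by (rewrite <- E; pt_eq; ring).
    apply Hcone_line in Hl; apply bis_vcomb_iff in Hb; [|lra].
    exists a, b; tauto.
  - intros (a & b & Ha & Hb & Hab & ->); split.
    + apply Hcone_line; exact Hab.
    + apply bis_vcomb_iff; lra.
Qed.

End CircleCone.

Theorem proposition2p3 (N : pt -> R) (x y p q : pt) (lam : R) :
  is_norm N ->
  x <> y ->
  parallel_to_seg_of_S N x y ->
  0 < lam ->
  max_seg (circle N p lam) x y ->
  in_open_strip x y q p ->
  let l := line_dir q (vsub y x) in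
  ((exists x1 y1, halfline x p x1 /\ l x1 /\ halfline y p y1 /\ l y1) /\
   (forall x1 y1, halfline x p x1 -> l x1 -> halfline y p y1 -> l y1 ->
      set_eq (fun z => l z /\ bis N x y z) (seg x1 y1))) /\
  subset (conv (fun z => halfline p (vsub (vscal 2 p) x) z \/
                         halfline p (vsub (vscal 2 p) y) z)) (bis N x y) /\
  has_nonempty_interior N (bis N x y).
Proof.
  (* [parallel_to_seg_of_S] only ensures that a circle as in [Hmax] exists,
     and [0 < lam] follows from [Hmax]. *)
  intros HN Hxy _ _ Hmax Hstrip l.
  destruct (in_open_strip_ratio x y q p Hstrip) as [Hh Hk].
  destruct (height_base x y) as [Hx0 Hy0].
  assert (Hhit : forall o z, height x y o = 0 ->
    halfline o p z /\ l z <-> z = vadd o (vscal (height x y q / height x y p) (vsub p o)))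
    by (intros; apply halfline_line_iff; auto; lra).
  split; [split | split].
  - exists (vadd x (vscal (height x y q / height x y p) (vsub p x))),
      (vadd y (vscal (height x y q / height x y p) (vsub p y))).
    pose proof (proj2 (Hhit x _ Hx0) eq_refl).
    pose proof (proj2 (Hhit y _ Hy0) eq_refl).
    tauto.
  - intros x1 y1 Hx1 Hlx1 Hy1 Hly1.
    rewrite (proj1 (Hhit x x1 Hx0) (conj Hx1 Hlx1)), (proj1 (Hhit y y1 Hy0) (conj Hy1 Hly1)).
    apply (line_bis_eq_seg N x y p lam HN Hmax q Hh Hk).
  - intros z Hz; apply (cone_subset_bis N x y p lam HN Hmax).
    apply conv_reflected_halflines_subset_cone, Hz.
  - apply (bis_nonempty_interior N x y p lam HN Hmax); rewrite cross_apex; exact Hh.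
Qed.
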